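(* Let $\mathbb{F}$ be a field, $A$ and $B$ finite-dimensional $\mathbb{F}$-spaces with $\dim A=n$, $\dim B=j$, $V=A\otimes_{\mathbb{F}}B$, and let $g\in\mathrm{GL}(A)$ with $\delta_A(g)=k$. Then: (i) $d_V(g\otimes s)\le kj$ for all $s\in\mathrm{GL}(B)$. (ii) If $k\ge n/2$, then $d_V(g\otimes s)\le k(j-2)+n$ for all but at most one $s\in\mathrm{GL}(B)$. (iii) If $g\notin\mathbf{Z}(\mathrm{GL}(A))$ and $j\ge2$, then $d_V(g\otimes s)\le(n-1)(j-1)+1$ for all but at most one $s\in\mathrm{GL}(B)$, and $d_V(g\otimes s)\le(n-1)j$ for all $s\in\mathrm{GL}(B)$.
   Context: For a finite-dimensional $\mathbb{F}$-space $U$ and $x\in\mathrm{GL}(U)$, $d_U(x)=\dim_{\mathbb{F}}\mathrm{Ker}(x-1_U)$, and $\delta_U(x)$ is the largest dimension of an eigenspace of $x$ on $U\otimes_{\mathbb{F}}\overline{\mathbb{F}}$. *)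

From HB Require Import structures.
From mathcomp Require Import all_boot all_order all_algebra all_fingroup all_character.
Set Implicit Arguments. Unset Strict Implicit. Unset Printing Implicit Defensive.
Import Order.TTheory GRing.Theory Num.Theory.
Local Open Scope ring_scope.

(* Linear maps of U = F^n are n x n matrices (row-vector convention);
   GL(U) = invertible matrices (x \in unitmx). *)

Definition dfix (F : fieldType) (n : nat) (x : 'M[F]_n) : nat :=
  \rank (kermx (x - 1%:M)).

Definition eigdim (L : fieldType) (n : nat) (x : 'M[L]_n) (l : L) : nat :=
  \rank (kermx (x - l%:M)).

(* delta_U(x) = k : the largest dimension of an eigenspace of x on U (x) L,
   where L is an algebraically closed field containing F via f. *)
Definition is_delta (F : fieldType) (L : closedFieldType) (f : {rmorphism F -> L})
  (n : nat) (x : 'M[F]_n) (k : nat) : Prop :=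
  (exists l : L, eigdim (map_mx f x) l = k) /\
  (forall l : L, (eigdim (map_mx f x) l <= k)%N).

Definition central_GL (F : fieldType) (n : nat) (x : 'M[F]_n) : Prop :=
  forall h : 'M[F]_n, h \in unitmx -> x *m h = h *m x.

From HB Require Import structures.
From mathcomp Require Import all_boot all_order all_algebra all_fingroup all_character.
From mathcomp Require Import zify.
From Stdlib Require Import Classical.
Set Implicit Arguments. Unset Strict Implicit. Unset Printing Implicit Defensive.
Import Order.TTheory GRing.Theory Num.Theory.
Local Open Scope ring_scope.

(* Extend scalars to the algebraic closure L and write G, S for the images of
   g, s.  A vector of V is an n x j matrix X, fixed by G (x) S iff
   G^T X = X c^T with c = (S^-1)^T.  Build a flag of row vectors u_1, u_2, ...
   in which each u_i is an eigenvector of c, for an eigenvalue nu, modulo the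
   earlier ones.  On the fixed points killed by u_1, ..., u_(i-1), the map
   X |-> X u_i^T lands in the nu-eigenspace of G, so each step of the flag
   costs at most delta(g) = k dimensions: d <= k j, and d <= j dim E_nu(G)
   when c = nu is scalar.  If s is not scalar, some u is not an eigenvector of
   c, and killing u already kills u c, so the first two steps cost at most n
   together: d <= n + k (j - 2).  Hence the only possible exceptions in (ii)
   and (iii) are scalars s = a, and the bounds force dim E_(a^-1)(G) to be so
   large that two distinct such a would give two eigenspaces of total
   dimension more than n. *)

Lemma index_allpairs_pair (T1 T2 : eqType) (s1 : seq T1) (s2 : seq T2) x1 x2 :
  x1 \in s1 -> x2 \in s2 ->
  index (x1, x2) [seq (y1, y2) | y1 <- s1, y2 <- s2] =
    (index x1 s1 * size s2 + index x2 s2)%N.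
Proof.
elim: s1 => [//|y1 s1 IH] /=; rewrite inE index_cat => s1x1 s2x2.
have [<-|ne] := eqVneq y1 x1.
  have inj_pair : injective (pair y1 : T2 -> T1 * T2) by move=> ? ? [].
  by rewrite mem_map // s2x2 index_map.
have -> : (x1, x2) \in [seq (y1, y2) | y2 <- s2] = false.
  by apply/mapP => -[y _ [E _]]; rewrite E eqxx in ne.
rewrite eq_sym (negbTE ne) /= in s1x1.
by rewrite size_map IH //=; lia.
Qed.

Lemma mxvec_index_val m n (i : 'I_m) (j : 'I_n) : mxvec_index i j = (i * n + j)%N :> nat.
Proof.
transitivity (index (i, j) (enum {: 'I_m * 'I_n})).
  rewrite /= -{2}(nth_enum_rank (i, j) (i, j)) index_uniq ?enum_uniq //.
  by rewrite -cardE ltn_ord.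
rewrite enumT unlock /= index_allpairs_pair ?mem_enum //.
by rewrite !index_enum_ord size_enum_ord.
Qed.

Lemma mxvec_index_lshift m n (j : 'I_n) :
  @mxvec_index m.+1 n (lshift m (ord0 : 'I_1)) j = lshift (m * n) j.
Proof. by apply: ord_inj; apply: mxvec_index_val. Qed.

Lemma mxvec_index_rshift m n (i : 'I_m) (j : 'I_n) :
  @mxvec_index m.+1 n (rshift 1 i) j = rshift n (mxvec_index i j).
Proof.
apply: ord_inj; apply: etrans (mxvec_index_val (rshift 1 i) j) _.
have /= -> := mxvec_index_val i j; lia.
Qed.

Section TensorProduct.
Variable R : fieldType.

Lemma trow_mxE n1 (u : 'rV[R]_n1) m2 n2 (B : 'M[R]_(m2, n2)) i2 j1 j2 :
  trow u B i2 (mxvec_index j1 j2) = u 0 j1 * B i2 j2.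
Proof.
elim: n1 u j1 => [|n1 IH] u j1; first by case: j1.
case: (split_ordP (j1 : 'I_(1 + n1))) => k ->.
  by rewrite (ord1 k) mxvec_index_lshift row_mxEl !mxE.
by rewrite mxvec_index_rshift; apply: etrans (row_mxEr _ _ _ _) _; rewrite IH mxE.
Qed.

Lemma tprod_mxE m1 n1 (A : 'M[R]_(m1, n1)) m2 n2 (B : 'M[R]_(m2, n2)) i1 i2 j1 j2 :
  tprod A B (mxvec_index i1 i2) (mxvec_index j1 j2) = A i1 j1 * B i2 j2.
Proof.
elim: m1 A i1 => [|m1 IH] A i1; first by case: i1.
case: (split_ordP (i1 : 'I_(1 + m1))) => k ->.
  rewrite (ord1 k) mxvec_index_lshift; apply: etrans (col_mxEu _ _ _ _) _.
  by rewrite trow_mxE !mxE.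
by rewrite mxvec_index_rshift; apply: etrans (col_mxEd _ _ _ _) _; rewrite IH mxE.
Qed.

Lemma mxvec_tprod m1 n1 m2 n2 (A : 'M[R]_(m1, n1)) (B : 'M[R]_(m2, n2)) X :
  mxvec X *m tprod A B = mxvec (A^T *m X *m B).
Proof.
apply/rowP => q; case/mxvec_indexP: q => j1 j2.
rewrite mxvecE !mxE (reindex _ (curry_mxvec_bij _ _)) /=.
transitivity (\sum_(i1 < m1) \sum_(i2 < m2) X i1 i2 * (A i1 j1 * B i2 j2)).
  by rewrite pair_big; apply: eq_bigr => -[i1 i2] _; rewrite mxvecE tprod_mxE.
rewrite exchange_big /=; apply: eq_bigr => i2 _.
rewrite !mxE big_distrl /=; apply: eq_bigr => i1 _.
by rewrite !mxE mulrA [X i1 i2 * _]mulrC.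
Qed.

End TensorProduct.

Lemma rank_col_mx_gt (R : fieldType) m n (A : 'M[R]_(m, n)) (v : 'rV_n) :
  ~~ (v <= A)%MS -> (\rank A < \rank (col_mx A v))%N.
Proof.
move=> notAv; apply: rank_ltmx.
by rewrite ltmxE col_mx_sub submx_refl (negbTE notAv) andbT -addsmxE addsmxSl.
Qed.

Lemma eigenvalue_scalar (R : fieldType) j (a nu : R) :
  eigenvalue (a%:M : 'M_j) nu -> nu = a.
Proof.
case/eigenvalueP => v; rewrite mul_mx_scalar => /eqP; rewrite -subr_eq0 -scalerBl.
by rewrite scaler_eq0 subr_eq0 => /orP[/eqP-> | /[swap] /negbTE->].
Qed.

Lemma is_scalar_mx_eigen (R : fieldType) j (c : 'M[R]_j) :
  (forall u : 'rV_j, (u *m c <= u)%MS) -> is_scalar_mx c.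
Proof.
(* The unit rows force c to be diagonal, the all-ones row forces the diagonal
   to be constant. *)
move=> eig_c; have offdiag i k : i != k -> c i k = 0.
  have [a /rowP/(_ k)] := sub_rVP (eig_c (delta_mx 0 i)).
  by rewrite -rowE !mxE eqxx eq_sym => /[swap] /negbTE ->; rewrite mulr0.
have [b /rowP eq_b] := sub_rVP (eig_c (const_mx 1)).
have diag k : c k k = b.
  have := eq_b k; rewrite !mxE (bigD1 k) //= big1 => [|i ne_ik].
    by rewrite mxE mul1r addr0 mulr1.
  by rewrite mxE mul1r offdiag.
case: j c eig_c offdiag {eq_b} diag => [|j] c _ offdiag diag.
  by rewrite /is_scalar_mx insubF.
apply/is_scalar_mxP; exists b; apply/matrixP => i k; rewrite mxE.
by have [<-|ne_ik] := eqVneq i k; rewrite ?diag ?offdiag.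
Qed.

Lemma nonscalar_rank_col_mx (R : fieldType) j (c : 'M[R]_j) :
  ~~ is_scalar_mx c -> exists u : 'rV_j, (2 <= \rank (col_mx u (u *m c)))%N.
Proof.
move=> /negP nsc.
have [u /negP not_eig_u] := not_all_ex_not _ _ (fun eig_c => nsc (is_scalar_mx_eigen eig_c)).
have u_neq0 : u != 0 by apply: contraNneq not_eig_u => ->; rewrite mul0mx sub0mx.
by exists u; have := rank_col_mx_gt not_eig_u; rewrite rank_rV u_neq0.
Qed.

Lemma nonscalar_dim (R : fieldType) j (c : 'M[R]_j) : ~~ is_scalar_mx c -> (2 <= j)%N.
Proof. by case/nonscalar_rank_col_mx => u /leq_trans; apply; apply: rank_leq_col. Qed.

Lemma eigdim_add_le (R : fieldType) n (G : 'M[R]_n) mu1 mu2 :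
  mu1 != mu2 -> (eigdim G mu1 + eigdim G mu2 <= n)%N.
Proof.
move=> ne_mu; rewrite /eigdim -mxrank_disjoint_sum ?rank_leq_col //.
apply/eqP/rowV0P => v; rewrite sub_capmx !sub_kermx !mulmxBr !mul_mx_scalar !subr_eq0.
case/andP => /eqP eq1 /eqP eq2.
have : (mu1 - mu2) *: v == 0 by rewrite scalerBl -eq1 -eq2 subrr.
by rewrite scaler_eq0 subr_eq0 (negbTE ne_mu) => /eqP.
Qed.

Lemma is_scalar_mx_trinv (R : fieldType) j (A : 'M[R]_j) :
  is_scalar_mx A -> is_scalar_mx (invmx A)^T.
Proof.
by case/is_scalar_mxP => a ->; rewrite invmx_scalar tr_scalar_mx scalar_mx_is_scalar.
Qed.

Lemma exists_rel_eigenvector (L : closedFieldType) j (c : 'M[L]_j) m (U : 'M_(m, j)) :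
  (\rank U < j)%N ->
  exists (u : 'rV_j) nu,
    [/\ ~~ (u <= U)%MS, eigenvalue c nu & (u *m (c - nu%:M) <= U)%MS].
Proof.
case: j c U => [//|j] c U ltUj.
have [v notUv] : exists v : 'rV_j.+1, ~~ (v <= U)%MS.
  have /row_subPn[i] : ~~ (1%:M <= U)%MS by rewrite sub1mx /row_full ltn_eqF.
  by exists (row i 1%:M).
(* By Cayley-Hamilton, v times the product of all factors c - z of the
   characteristic polynomial lies in U; take u to be v times the longest
   prefix of that product that does not. *)
have [rs def_c] := closed_field_poly_normal (char_poly c).
rewrite (monicP (char_poly_monic c)) scale1r in def_c.
have eig_rs z : z \in rs -> eigenvalue c z.
  by rewrite eigenvalue_root_char def_c root_prod_XsubC.
have : (v *m \prod_(z <- rs) (c - z%:M) <= U)%MS.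
  suff -> : \prod_(z <- rs) (c - z%:M) = 0 by rewrite mulmx0 sub0mx.
  rewrite -(Cayley_Hamilton c) def_c rmorph_prod; apply: eq_bigr => z _.
  by rewrite rmorphB /= horner_mx_X horner_mx_C.
elim: rs v notUv eig_rs {def_c} => [|z rs IH] v notUv eig_rs.
  by rewrite big_nil mulmx1 (negbTE notUv).
rewrite big_cons -mulmxE mulmxA.
have [sub_z|notUvz] := boolP (v *m (c - z%:M) <= U)%MS.
  by exists v, z; rewrite eig_rs ?mem_head.
by apply: IH notUvz _ => z' rs_z'; rewrite eig_rs // inE rs_z' orbT.
Qed.

Section Intertwiners.
Variables (R : fieldType) (n j : nat) (G : 'M[R]_n) (c : 'M[R]_j).

Definition intertw : 'M[R]_(n * j) := kermx (tprod G 1%:M - tprod 1%:M c^T).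

Definition intertw_ann m (U : 'M[R]_(m, j)) := (intertw :&: kermx (tprod 1%:M U^T))%MS.

Lemma sub_intertw w : (w <= intertw)%MS = (G^T *m vec_mx w == vec_mx w *m c^T).
Proof.
rewrite sub_kermx mulmxBr -[w]vec_mxK !mxvec_tprod trmx1 mulmx1 mul1mx subr_eq0.
by rewrite (inj_eq (can_inj mxvecK)) vec_mxK.
Qed.

Lemma sub_intertw_ann m (U : 'M[R]_(m, j)) w :
  (w <= intertw_ann U)%MS = (w <= intertw)%MS && (vec_mx w *m U^T == 0).
Proof.
by rewrite sub_capmx sub_kermx -[w in w *m _]vec_mxK mxvec_tprod trmx1 mul1mx mxvec_eq0.
Qed.

Definition contract (u : 'rV[R]_j) (w : 'rV[R]_(n * j)) : 'rV[R]_n := u *m (vec_mx w)^T.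

Lemma contract_is_linear u : linear (contract u).
Proof. by move=> a x y; rewrite /contract linearP /= linearP /= mulmxDr scalemxAr. Qed.

HB.instance Definition _ u :=
  GRing.isSemilinear.Build _ _ _ _ (contract u)
    (GRing.semilinear_linear (contract_is_linear u)).

Lemma mul_rV_lin1_contract u w : w *m lin1_mx (contract u) = contract u w.
Proof. exact: mul_rV_lin1. Qed.

Lemma contract_eq0 u w : (contract u w == 0) = (vec_mx w *m u^T == 0).
Proof. by rewrite /contract -[u in u *m _]trmxK -trmx_mul trmx_eq0. Qed.

Lemma sub_intertw_ann_col m (U : 'M[R]_(m, j)) (u : 'rV_j) w :
  (w <= intertw_ann (col_mx U u))%MS = (w <= intertw_ann U)%MS && (contract u w == 0).
Proof. by rewrite !sub_intertw_ann contract_eq0 tr_col_mx mul_mx_row row_mx_eq0 andbA. Qed.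

Lemma contract_intertw u w : (w <= intertw)%MS -> contract u w *m G = contract (u *m c) w.
Proof.
rewrite sub_intertw /contract => /eqP eqGX.
have eqXG : (vec_mx w)^T *m G = c *m (vec_mx w)^T.
  by rewrite -[G]trmxK -trmx_mul eqGX trmx_mul trmxK.
by rewrite -mulmxA eqXG mulmxA.
Qed.

Lemma rank_intertw_ann_step m (U : 'M[R]_(m, j)) (u : 'rV_j) nu :
  (u *m (c - nu%:M) <= U)%MS ->
  (\rank (intertw_ann U) <= eigdim G nu + \rank (intertw_ann (col_mx U u)))%N.
Proof.
case/submxP => D eqD; rewrite -(mxrank_mul_ker _ (lin1_mx (contract u))).
apply: leq_add; apply: mxrankS; apply/row_subP => i; last first.
  have := row_sub i (intertw_ann U :&: kermx (lin1_mx (contract u)))%MS.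
  by rewrite sub_capmx sub_kermx mul_rV_lin1_contract sub_intertw_ann_col.
rewrite row_mul mul_rV_lin1_contract sub_kermx.
have /[!sub_intertw_ann] /andP[Xi /eqP XiU] := row_sub i (intertw_ann U).
rewrite mulmxBr contract_intertw // mul_mx_scalar /contract scalemxAl.
rewrite -mulmxBl -mul_mx_scalar -mulmxBr eqD -mulmxA -[U *m _]trmxK trmx_mul trmxK.
by rewrite XiU trmx0 mulmx0.
Qed.

Lemma intertw_ann_full m (U : 'M[R]_(m, j)) : row_full U -> intertw_ann U = 0.
Proof.
move=> fullU; apply/eqP/rowV0P => w; rewrite sub_intertw_ann => /andP[_ /eqP XU].
have freeUt : row_free U^T by rewrite /row_free mxrank_tr.
apply: (can_inj vec_mxK); rewrite linear0; apply: (row_free_inj freeUt).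
by rewrite XU mul0mx.
Qed.

Lemma intertw_sub_ann0 m : (intertw <= intertw_ann (0 : 'M_(m, j)))%MS.
Proof. by apply/row_subP => i; rewrite sub_intertw_ann row_sub trmx0 mulmx0 eqxx. Qed.

Lemma rank_intertw_le_ann2 (u : 'rV[R]_j) :
  (\rank intertw <= n + \rank (intertw_ann (col_mx u (u *m c))))%N.
Proof.
rewrite -(mxrank_mul_ker intertw (lin1_mx (contract u))) leq_add ?rank_leq_col //.
apply: mxrankS; apply/row_subP => i.
have := row_sub i (intertw :&: kermx (lin1_mx (contract u)))%MS.
rewrite sub_capmx sub_kermx mul_rV_lin1_contract => /andP[Xi Xiu].
rewrite sub_intertw_ann_col sub_intertw_ann Xi -contract_eq0 Xiu.
by rewrite /= -contract_intertw // (eqP Xiu) mul0mx.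
Qed.

End Intertwiners.

Section ClosedField.
Variables (L : closedFieldType) (n j : nat) (G : 'M[L]_n) (c : 'M[L]_j) (K : nat).
Hypothesis eigdim_le : forall nu, eigenvalue c nu -> (eigdim G nu <= K)%N.

Lemma rank_intertw_ann_le m (U : 'M[L]_(m, j)) :
  (\rank (intertw_ann G c U) <= K * (j - \rank U))%N.
Proof.
move: {2}(j - \rank U)%N (leqnn (j - \rank U)) => d.
elim: d m U => [|d IH] m U le_d.
  by rewrite intertw_ann_full ?mxrank0 // /row_full eqn_leq rank_leq_col -subn_eq0 -leqn0.
have [fullU|] := boolP (row_full U); first by rewrite intertw_ann_full ?mxrank0.
rewrite /row_full => neq_rank.
have ltUj : (\rank U < j)%N by rewrite ltn_neqAle neq_rank rank_leq_col.
have [u [nu [notUu eig_nu sub_u]]] := exists_rel_eigenvector c ltUj.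
have lt_rank : (\rank U < \rank (col_mx U u))%N := rank_col_mx_gt notUu.
have le_rank : (\rank (col_mx U u) <= j)%N := rank_leq_col _.
have IHu := IH _ (col_mx U u) ltac:(lia).
apply: leq_trans (rank_intertw_ann_step G sub_u) _.
apply: leq_trans (leq_add (eigdim_le eig_nu) IHu) _.
by rewrite -mulnS leq_mul2l; apply/orP; right; lia.
Qed.

Lemma rank_intertw_le : (\rank (intertw G c) <= K * j)%N.
Proof.
apply: leq_trans (mxrankS (intertw_sub_ann0 G c 1)) _.
by have := rank_intertw_ann_le (0 : 'M_(1, j)); rewrite mxrank0 subn0.
Qed.

Lemma rank_intertw_nonscalar :
  ~~ is_scalar_mx c -> (\rank (intertw G c) <= n + K * (j - 2))%N.
Proof.
case/nonscalar_rank_col_mx => u rank2.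
apply: leq_trans (rank_intertw_le_ann2 G c u) _; rewrite leq_add2l.
apply: leq_trans (rank_intertw_ann_le _) _.
by rewrite leq_mul2l leq_sub2l ?orbT.
Qed.

End ClosedField.

Lemma rank_intertw_scalar (L : closedFieldType) n j (G : 'M[L]_n) mu :
  (\rank (intertw G (mu%:M : 'M_j)) <= eigdim G mu * j)%N.
Proof. by apply: rank_intertw_le => nu /eigenvalue_scalar ->. Qed.

Lemma rank_kermx_tprod_sub1 (R : fieldType) n j (G : 'M[R]_n) (S : 'M[R]_j) :
  S \in unitmx -> \rank (kermx (tprod G S - 1%:M)) = \rank (intertw G (invmx S)^T).
Proof.
move=> unitS; rewrite /intertw trmxK !mxrank_ker; congr (_ - _)%N.
have -> : tprod G S - 1%:M = (tprod G 1%:M - tprod 1%:M (invmx S)) *m tprod 1%:M S.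
  by rewrite mulmxBl -!tprodE !mulmx1 mul1mx mulVmx // tprod1.
rewrite mxrankMfree // row_free_unit.
suff /mulmx1_unit[] : tprod (1%:M : 'M_n) S *m tprod (1%:M : 'M_n) (invmx S) = 1%:M by [].
by rewrite -tprodE mulmx1 mulmxV // tprod1.
Qed.

Lemma map_tprod (F L : fieldType) (f : {rmorphism F -> L}) m1 n1 m2 n2
  (A : 'M[F]_(m1, n1)) (B : 'M[F]_(m2, n2)) :
  map_mx f (tprod A B) = tprod (map_mx f A) (map_mx f B).
Proof.
apply/matrixP => p q; case/mxvec_indexP: p => i1 i2; case/mxvec_indexP: q => j1 j2.
by rewrite mxE !tprod_mxE rmorphM !mxE.
Qed.

Section TensorFixedPoints.
Variables (F : fieldType) (L : closedFieldType) (f : {rmorphism F -> L}).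
Variables (n j k : nat) (g : 'M[F]_n).
Local Notation G := (map_mx f g).

Lemma dfix_tprod (s : 'M_j) : s \in unitmx ->
  dfix (tprod g s) = \rank (intertw G (invmx (map_mx f s))^T).
Proof.
move=> unit_s; rewrite -rank_kermx_tprod_sub1 ?map_unitmx // /dfix !mxrank_ker.
by rewrite -map_tprod -(map_mx1 f) -map_mxB mxrank_map.
Qed.

Lemma dfix_tprod_scalar a : (a%:M : 'M_j) \in unitmx ->
  (dfix (tprod g (a%:M : 'M_j)) <= eigdim G (f a)^-1 * j)%N.
Proof.
move=> unit_a; rewrite dfix_tprod // map_scalar_mx invmx_scalar tr_scalar_mx.
exact: rank_intertw_scalar.
Qed.

Hypothesis delta_g : is_delta f g k.

Lemma dfix_tprod_le (s : 'M_j) : s \in unitmx -> (dfix (tprod g s) <= k * j)%N.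
Proof.
by move=> unit_s; rewrite dfix_tprod //; apply: rank_intertw_le => nu _; apply: delta_g.2.
Qed.

Lemma dfix_tprod_nonscalar (s : 'M_j) : s \in unitmx -> ~~ is_scalar_mx s ->
  (dfix (tprod g s) <= n + k * (j - 2))%N.
Proof.
move=> unit_s nsc_s; rewrite dfix_tprod //.
apply: rank_intertw_nonscalar => [nu _|]; first exact: delta_g.2.
apply: contra nsc_s => /is_scalar_mx_trinv.
by rewrite trmx_inv trmxK invmxK map_mx_is_scalar.
Qed.

Lemma dfix_tprod_exceptional (B : int) (s : 'M_j) :
  ((2 <= j)%N -> (n + k * (j - 2))%:Z <= B) -> s \in unitmx ->
  ~ (dfix (tprod g s))%:Z <= B ->
  exists a, s = a%:M /\ B < (eigdim G (f a)^-1 * j)%:Z.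
Proof.
move=> le_B unit_s not_le_B.
have [/is_scalar_mxP[a def_s]|nsc_s] := boolP (is_scalar_mx s).
  exists a; split=> //; move: unit_s not_le_B; rewrite def_s => /dfix_tprod_scalar.
  lia.
have := dfix_tprod_nonscalar unit_s nsc_s; have := le_B (nonscalar_dim nsc_s).
lia.
Qed.

Lemma dfix_tprod_exceptional_unique (B : int) :
  ((2 <= j)%N -> (n + k * (j - 2))%:Z <= B) ->
  ((0 < j)%N -> forall mu1 mu2,
     B < (eigdim G mu1 * j)%:Z -> B < (eigdim G mu2 * j)%:Z -> mu1 = mu2) ->
  forall s1 s2 : 'M_j, s1 \in unitmx -> s2 \in unitmx ->
  ~ (dfix (tprod g s1))%:Z <= B -> ~ (dfix (tprod g s2))%:Z <= B -> s1 = s2.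
Proof.
move=> le_B uniq_mu s1 s2 unit1 unit2 big1 big2.
have [j0|j_gt0] := posnP j.
  by apply/matrixP => i; have := ltn_ord i; rewrite {2}j0.
have [a1 [-> gt1]] := dfix_tprod_exceptional le_B unit1 big1.
have [a2 [-> gt2]] := dfix_tprod_exceptional le_B unit2 big2.
by have /invr_inj/fmorph_inj-> := uniq_mu j_gt0 _ _ gt1 gt2.
Qed.

End TensorFixedPoints.

Lemma delta_le_dim (F : fieldType) (L : closedFieldType) (f : {rmorphism F -> L})
  n (g : 'M[F]_n) k : is_delta f g k -> (k <= n)%N.
Proof. by case=> -[l <-] _; apply: rank_leq_col. Qed.

Lemma noncentral_dim (F : fieldType) n (g : 'M[F]_n) : ~ central_GL g -> (2 <= n)%N.
Proof.
case: n g => [|[|n]] g // nc_g; case: nc_g => h _.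
  by rewrite [g *m h]flatmx0 [h *m g]flatmx0.
by rewrite [g]mx11_scalar scalar_mxC.
Qed.

Lemma delta_lt_noncentral (F : fieldType) (L : closedFieldType) (f : {rmorphism F -> L})
  n (g : 'M[F]_n) k : is_delta f g k -> ~ central_GL g -> (k < n)%N.
Proof.
move=> delta_g nc_g; rewrite ltn_neqAle (delta_le_dim delta_g) andbT.
apply: contra_notN nc_g => /eqP k_eq_n h _; case: delta_g => -[l] eig_l _.
have : (1%:M <= kermx (map_mx f g - l%:M))%MS.
  by rewrite sub1mx; apply/eqP; rewrite [RHS]k_eq_n in eig_l.
rewrite sub_kermx mul1mx subr_eq0 => /eqP eq_g; apply: (map_mx_inj (f := f)).
by rewrite !map_mxM eq_g scalar_mxC.
Qed.

Theorem lemma9p2 (F : fieldType) (L : closedFieldType) (f : {rmorphism F -> L})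
  (n j k : nat) (g : 'M[F]_n) (hg : g \in unitmx) (hk : is_delta f g k) :
  (* (i) *)
  (forall s : 'M[F]_j, s \in unitmx -> (dfix (tprod g s) <= k * j)%N) /\
  (* (ii) *)
  ((n <= 2 * k)%N ->
     forall s1 s2 : 'M[F]_j, s1 \in unitmx -> s2 \in unitmx ->
       ~ ((dfix (tprod g s1))%:Z <= k%:Z * (j%:Z - 2) + n%:Z) ->
       ~ ((dfix (tprod g s2))%:Z <= k%:Z * (j%:Z - 2) + n%:Z) ->
       s1 = s2) /\
  (* (iii) *)
  (~ central_GL g -> (2 <= j)%N ->
     (forall s1 s2 : 'M[F]_j, s1 \in unitmx -> s2 \in unitmx ->
        ~ ((dfix (tprod g s1))%:Z <= (n%:Z - 1) * (j%:Z - 1) + 1) ->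
        ~ ((dfix (tprod g s2))%:Z <= (n%:Z - 1) * (j%:Z - 1) + 1) ->
        s1 = s2) /\
     (forall s : 'M[F]_j, s \in unitmx ->
        (dfix (tprod g s))%:Z <= (n%:Z - 1) * j%:Z)).
Proof.
have [[l0 eig_l0] eig_le] := hk; have k_le_n := delta_le_dim hk.
split; first exact: dfix_tprod_le hk.
split.
  move=> n_le_2k; apply: (dfix_tprod_exceptional_unique hk) => [|j_gt0 mu1 mu2]; first nia.
  suff large_l0 mu : k%:Z * (j%:Z - 2) + n%:Z < (eigdim (map_mx f g) mu * j)%:Z -> mu = l0.
    by move=> /large_l0-> /large_l0->.
  move=> big; apply/eqP/negP => /negP/(eigdim_add_le (map_mx f g)).
  by have := eig_le mu; rewrite eig_l0; nia.
move=> nc_g j_ge2; have := delta_lt_noncentral hk nc_g; have := noncentral_dim nc_g.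
split; last by move=> s /(dfix_tprod_le hk); nia.
apply: (dfix_tprod_exceptional_unique hk) => [|_ mu1 mu2 big1 big2]; first nia.
apply/eqP/negP => /negP/(eigdim_add_le (map_mx f g)); nia.
Qed.
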